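(* Let $k\in\mathbb{N}$. The set $$\mathcal{P}=\Big\{\sum_{i=1}^N a_i p_{v_i}: N\in\mathbb{N},\ a_i\in\mathbb{C},\ v_i\in T\Big\}$$ is dense in $\mathcal{L}^{(k)}_0$ with respect to the norm $\|\cdot\|_k$. In fact, $\mathcal{L}^{(k)}_0$ is a closed separable subspace of $\mathcal{L}^{(k)}$.
   Context: $T$ is a tree (locally finite, connected, simply connected graph, identified with its vertex set) without terminal vertices, rooted at $o$. $|v|$ is the distance from $o$ to $v$; for $v\ne o$, $v^-$ is the parent of $v$. $T^*=T\setminus\{o\}$, $Df(v)=|f(v)-f(v^-)|$. For $x\ge1$: $\ell_0(x)=1$, $\ell_1(x)=1+\ln x$, $\ell_j(x)=1+\ln\ell_{j-1}(x)$ for $j\ge2$. $\mathcal{L}^{(k)}$ is the space of $f:T\to\mathbb{C}$ with $\sup_{v\in T^*}|v|\prod_{j=0}^{k-1}\ell_j(|v|)Df(v)<\infty$, normed by $\|f\|_k=|f(o)|+\sup_{v\in T^*}|v|\prod_{j=0}^{k-1}\ell_j(|v|)Df(v)$; $\mathcal{L}^{(k)}_0$ is its subspace of $f$ with $\lim_{|v|\to\infty}|v|\prod_{j=0}^{k-1}\ell_j(|v|)Df(v)=0$. For $v\in T$, $S_v$ is the sector consisting of $v$ and all its descendants (vertices $w$ such that $v$ lies on the path from $o$ to $w$), and $p_v=\chi_{S_v}$ is its characteristic function. *)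

From Stdlib Require Import Reals List ClassicalEpsilon.
From Coquelicot Require Import Coquelicot.
Open Scope R_scope.

(* A rooted tree T with root o, presented by its parent map v |-> v^-
   (with the convention par o = o). Edges are {v, par v} for v <> o. *)
Section Tree.
Variables (V : Type) (o : V) (par : V -> V).

Definition adj (u v : V) : Prop := (u <> o /\ par u = v) \/ (v <> o /\ par v = u).

Definition terminal (v : V) : Prop :=
  exists u, adj v u /\ forall u', adj v u' -> u' = u.

Definition is_tree_rooted : Prop :=
  par o = o /\
  (* connected: every vertex reaches the root (this also forces acyclicity) *)
  (forall v, exists n, Nat.iter n par v = o) /\
  (forall v, exists l : list V, forall u, adj v u -> In u l) /\
  (forall v, ~ terminal v).
End Tree.

Record rooted_tree := RootedTree {
  vtx :> Type;
  root : vtx;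
  parent : vtx -> vtx;
  treeP : is_tree_rooted vtx root parent
}.

Section Spaces.
Variable T : rooted_tree.
Notation o := (root T).
Notation par := (parent T).

Definition depth (v : T) : nat :=
  epsilon (inhabits 0%nat)
    (fun n => Nat.iter n par v = o /\ forall m, (m < n)%nat -> Nat.iter m par v <> o).

Fixpoint ell (j : nat) (x : R) : R :=
  match j with
  | O => 1
  | S O => 1 + ln x
  | S ((S _) as j') => 1 + ln (ell j' x)
  end.

Fixpoint prod_ell (k : nat) (x : R) : R :=
  match k with
  | O => 1
  | S k' => prod_ell k' x * ell k' x
  end.

Definition wt (k : nat) (v : T) : R :=
  INR (depth v) * prod_ell k (INR (depth v)).

Definition Df (f : T -> C) (v : T) : R := Cmod (Cminus (f v) (f (par v))).

Definition in_L (k : nat) (f : T -> C) : Prop :=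
  exists M : R, forall v, v <> o -> wt k v * Df f v <= M.

Definition in_L0 (k : nat) (f : T -> C) : Prop :=
  in_L k f /\
  forall eps, 0 < eps -> exists N : nat, forall v, v <> o -> (N <= depth v)%nat ->
    Rabs (wt k v * Df f v) < eps.

Definition normk (k : nat) (f : T -> C) : R :=
  Cmod (f o) + real (Lub_Rbar (fun x => exists v, v <> o /\ x = wt k v * Df f v)).

Definition in_sector (v w : T) : Prop := exists n, Nat.iter n par w = v.

Definition p (v : T) : T -> C :=
  fun w => if excluded_middle_informative (in_sector v w) then RtoC 1 else RtoC 0.

Definition in_P (g : T -> C) : Prop :=
  exists l : list (C * T),
    forall w, g w = fold_right (fun av acc => Cplus (Cmult (fst av) (p (snd av) w)) acc)
                               (RtoC 0) l.

Definition fsub (f g : T -> C) : T -> C := fun w => Cminus (f w) (g w).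
End Spaces.

From Stdlib Require Import Reals List Lia Lra Cantor ClassicalEpsilon Classical FunctionalExtensionality.
From Coquelicot Require Import Coquelicot.
Open Scope R_scope.

(* Let a_N(w) be the ancestor of w at level min(N, |w|).  The truncation f o a_N agrees with f
   up to level N and is constant on every edge below level N, so ||f - f o a_N||_k is the tail
   sup_{|v| > N} |v| prod_j l_j(|v|) Df(v), which tends to 0 for f in L0^(k).  Telescoping along
   the path from o shows f o a_N = f(o) p_o + sum_{1 <= |v| <= N} (f(v) - f(v^-)) p_v, a finite
   sum because T is locally finite, so f o a_N lies in P.  Rounding the finitely many values of
   f on the levels <= N to a grid of complex numbers gives a countable dense family inside P.
   Conversely D p_v is the indicator of {v}, so P lies in L0^(k); closedness is the usual
   eps/2 argument. *)

Lemma ell_mono (x y : R) : 1 <= x <= y -> forall j, 1 <= ell j x <= ell j y.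
Proof.
  intros Hxy.
  assert (Hln : forall a b, 1 <= a <= b -> 0 <= ln a <= ln b).
  { intros a b Hab. rewrite <- ln_1. split; apply ln_le; lra. }
  assert (H : forall j, 1 <= ell j x <= ell j y /\ 1 <= ell (S j) x <= ell (S j) y).
  { induction j as [|j [_ IH]].
    - specialize (Hln x y Hxy). simpl. lra.
    - split; [exact IH|].
      change (1 <= 1 + ln (ell (S j) x) <= 1 + ln (ell (S j) y)).
      specialize (Hln _ _ IH). lra. }
  intros j. apply H.
Qed.

Lemma prod_ell_mono (x y : R) : 1 <= x <= y -> forall k, 1 <= prod_ell k x <= prod_ell k y.
Proof.
  intros Hxy k. induction k as [|k IH]; simpl; [lra|].
  pose proof (ell_mono x y Hxy k).
  split; [nra | apply Rmult_le_compat; lra].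
Qed.

Definition weight (k n : nat) : R := INR n * prod_ell k (INR n).

Lemma weight_nonneg k n : 0 <= weight k n.
Proof.
  unfold weight. destruct n as [|n]; [simpl; lra|].
  assert (H1 : 1 <= INR (S n)) by (apply (le_INR 1); lia).
  pose proof (prod_ell_mono _ _ (conj H1 (Rle_refl _)) k). nra.
Qed.

Lemma weight_le k m n : (m <= n)%nat -> weight k m <= weight k n.
Proof.
  intros Hmn. destruct m as [|m].
  - unfold weight at 1. simpl INR. rewrite Rmult_0_l. apply weight_nonneg.
  - assert (H1 : 1 <= INR (S m)) by (apply (le_INR 1); lia).
    assert (H2 : INR (S m) <= INR n) by (apply le_INR; exact Hmn).
    pose proof (prod_ell_mono _ _ (conj H1 H2) k).
    unfold weight. apply Rmult_le_compat; lra.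
Qed.

Definition grid_R (m c : nat) : R :=
  let (a, b) := Cantor.of_nat c in (INR a - INR b) / INR (S m).

Lemma grid_R_approx m x : exists c, Rabs (x - grid_R m c) <= / INR (S m).
Proof.
  set (s := INR (S m)). assert (Hs : 0 < s) by apply lt_0_INR, Nat.lt_0_succ.
  set (z := up (x * s)). destruct (archimed (x * s)) as [Hz1 Hz2]. fold z in Hz1, Hz2.
  exists (Cantor.to_nat (Z.to_nat z, Z.to_nat (- z))).
  unfold grid_R. rewrite Cantor.cancel_of_to. fold s.
  replace (INR (Z.to_nat z) - INR (Z.to_nat (- z))) with (IZR z)
    by (rewrite !INR_IZR_INZ, <- minus_IZR; f_equal; lia).
  replace (x - IZR z / s) with ((x * s - IZR z) * / s) by (field; lra).
  rewrite Rabs_mult, (Rabs_pos_eq (/ s)) by (apply Rlt_le, Rinv_0_lt_compat, Hs).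
  rewrite <- (Rmult_1_l (/ s)) at 2.
  apply Rmult_le_compat_r; [apply Rlt_le, Rinv_0_lt_compat, Hs|].
  apply Rabs_le. lra.
Qed.

Definition grid_C (m c : nat) : C :=
  let (c1, c2) := Cantor.of_nat c in (grid_R m c1, grid_R m c2).

Lemma Cmod_le_Rabs_add (x y : R) : Cmod (x, y) <= Rabs x + Rabs y.
Proof.
  replace (x, y) with (Cplus (RtoC x) (Cmult Ci (RtoC y))) by (apply injective_projections; simpl; ring).
  eapply Rle_trans; [apply Cmod_triangle|].
  rewrite Cmod_mult, Cmod_Ci, !Cmod_R. lra.
Qed.

Lemma grid_C_dense (delta : R) : 0 < delta ->
  exists m (h : C -> nat), forall z, Cmod (Cminus z (grid_C m (h z))) <= delta.
Proof.
  intros Hdelta.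
  destruct (archimed_cor1 (delta / 2)) as [[|m] [Hm Hm0]]; [lra | lia |].
  assert (Happrox : forall z : C, exists c, Cmod (Cminus z (grid_C m c)) <= delta).
  { intros [x y].
    destruct (grid_R_approx m x) as [c1 H1]. destruct (grid_R_approx m y) as [c2 H2].
    exists (Cantor.to_nat (c1, c2)). unfold grid_C. rewrite Cantor.cancel_of_to.
    eapply Rle_trans; [apply Cmod_le_Rabs_add|]. simpl. unfold Rminus in H1, H2. lra. }
  exists m, (fun z => proj1_sig (constructive_indefinite_description _ (Happrox z))).
  intros z. exact (proj2_sig (constructive_indefinite_description _ (Happrox z))).
Qed.

Fixpoint decode_list (len n : nat) : list nat :=
  match len with
  | O => nil
  | S len' => let (a, b) := Cantor.of_nat n in a :: decode_list len' b
  end.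

Lemma decode_list_surj (l : list nat) : exists n, decode_list (length l) n = l.
Proof.
  induction l as [|a l [n Hn]]; [exists O; reflexivity|].
  exists (Cantor.to_nat (a, n)). cbn [decode_list length].
  rewrite Cantor.cancel_of_to. congruence.
Qed.

Fixpoint index {A : Type} (eq_dec : forall x y : A, {x = y} + {x <> y}) (x : A) (l : list A) : nat :=
  match l with
  | nil => O
  | y :: l' => if eq_dec x y then O else S (index eq_dec x l')
  end.

Lemma nth_map_index {A B : Type} eq_dec (g : A -> B) (x : A) l (d : B) :
  In x l -> nth (index eq_dec x l) (map g l) d = g x.
Proof.
  induction l as [|y l IH]; [intros []|]. intros Hx. simpl.
  destruct (eq_dec x y) as [->|Hne]; [reflexivity|].
  apply IH. destruct Hx; [congruence|assumption].
Qed.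

Section Tree.
Variable T : rooted_tree.
Notation o := (root T).
Notation par := (parent T).

Lemma parent_root : par o = o.
Proof. exact (proj1 (treeP T)). Qed.

Lemma iter_parent_root m : Nat.iter m par o = o.
Proof. induction m as [|m IH]; [reflexivity|]. simpl. rewrite IH. exact parent_root. Qed.

Lemma depth_spec (v : T) :
  Nat.iter (depth T v) par v = o /\
  forall m, (m < depth T v)%nat -> Nat.iter m par v <> o.
Proof.
  unfold depth. apply epsilon_spec.
  destruct (Wf_nat.dec_inh_nat_subset_has_unique_least_element (fun n => Nat.iter n par v = o))
    as [n [[Hn Hleast] _]].
  - intros n. apply classic.
  - exact (proj1 (proj2 (treeP T)) v).
  - exists n. split; [exact Hn|]. intros m Hm Hroot. specialize (Hleast m Hroot). lia.
Qed.

Lemma iter_parent_eq_root (v : T) n : Nat.iter n par v = o <-> (depth T v <= n)%nat.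
Proof.
  destruct (depth_spec v) as [Hd Hmin]. split.
  - intros Hn. destruct (Nat.le_gt_cases (depth T v) n) as [|Hlt]; [assumption|].
    exfalso. exact (Hmin n Hlt Hn).
  - intros Hle. replace n with ((n - depth T v) + depth T v)%nat by lia.
    rewrite Nat.iter_add, Hd. apply iter_parent_root.
Qed.

Lemma depth_root : depth T o = 0%nat.
Proof. pose proof (proj1 (iter_parent_eq_root o 0) eq_refl). lia. Qed.

Lemma depth_eq0 (v : T) : depth T v = 0%nat -> v = o.
Proof. intros H. apply (iter_parent_eq_root v 0). lia. Qed.

Lemma depth_parent (v : T) : depth T (par v) = (depth T v - 1)%nat.
Proof.
  assert (Hshift : forall n, (depth T (par v) <= n)%nat <-> (depth T v <= S n)%nat).
  { intros n. rewrite <- !iter_parent_eq_root, Nat.iter_succ_r. reflexivity. }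
  destruct (classic (v = o)) as [->|Hv].
  - rewrite parent_root, depth_root. reflexivity.
  - assert (depth T v <> 0%nat) by (intros H; exact (Hv (depth_eq0 v H))).
    pose proof (proj2 (Hshift (depth T v - 1)%nat) ltac:(lia)).
    pose proof (proj1 (Hshift (depth T (par v))) (le_n _)). lia.
Qed.

Lemma depth_iter_parent j (v : T) : depth T (Nat.iter j par v) = (depth T v - j)%nat.
Proof. induction j as [|j IH]; simpl; [lia|]. rewrite depth_parent, IH. lia. Qed.

Definition ancestor (N : nat) (w : T) : T := Nat.iter (depth T w - N) par w.

Lemma depth_ancestor N w : depth T (ancestor N w) = Nat.min N (depth T w).
Proof. unfold ancestor. rewrite depth_iter_parent. lia. Qed.

Lemma ancestor_id N w : (depth T w <= N)%nat -> ancestor N w = w.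
Proof. intros H. unfold ancestor. replace (depth T w - N)%nat with 0%nat by lia. reflexivity. Qed.

Lemma ancestor_parent N w : (N < depth T w)%nat -> ancestor N (par w) = ancestor N w.
Proof.
  intros H. unfold ancestor. rewrite depth_parent, <- Nat.iter_succ_r. f_equal. lia.
Qed.

Lemma parent_ancestor_S N w : (N < depth T w)%nat -> par (ancestor (S N) w) = ancestor N w.
Proof. intros H. unfold ancestor. rewrite <- Nat.iter_succ. f_equal. lia. Qed.

Lemma in_sector_ancestor N w : in_sector T (ancestor N w) w.
Proof. exists (depth T w - N)%nat. reflexivity. Qed.

Lemma in_sector_ancestor_depth v w :
  in_sector T v w -> (depth T v <= depth T w)%nat /\ v = ancestor (depth T v) w.
Proof.
  intros [n <-]. rewrite depth_iter_parent. split; [lia|].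
  destruct (Nat.le_gt_cases n (depth T w)) as [Hle|Hgt].
  - unfold ancestor. f_equal. lia.
  - replace (depth T w - n)%nat with 0%nat by lia.
    rewrite (proj2 (iter_parent_eq_root w n)) by lia.
    symmetry. apply iter_parent_eq_root. lia.
Qed.

Lemma in_sector_parent v w : w <> v -> in_sector T v (par w) <-> in_sector T v w.
Proof.
  intros Hw. split.
  - intros [n Hn]. exists (S n). rewrite Nat.iter_succ_r. exact Hn.
  - intros [[|n] Hn]; [simpl in Hn; congruence|].
    exists n. rewrite <- Nat.iter_succ_r. exact Hn.
Qed.

Lemma p_in_sector v w : in_sector T v w -> p T v w = RtoC 1.
Proof. intros H. unfold p. destruct (excluded_middle_informative _); tauto. Qed.

Lemma p_notin_sector v w : ~ in_sector T v w -> p T v w = RtoC 0.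
Proof. intros H. unfold p. destruct (excluded_middle_informative _); tauto. Qed.

Lemma p_root w : p T o w = RtoC 1.
Proof. apply p_in_sector. exists (depth T w). apply depth_spec. Qed.

Lemma p_parent v w : w <> v -> p T v (par w) = p T v w.
Proof.
  intros Hw. unfold p.
  destruct (excluded_middle_informative (in_sector T v (par w))) as [H1|H1],
    (excluded_middle_informative (in_sector T v w)) as [H2|H2]; try reflexivity;
    exfalso; rewrite (in_sector_parent v w Hw) in H1; tauto.
Qed.

Lemma Cmod_p_le1 v w : Cmod (p T v w) <= 1.
Proof.
  unfold p. destruct (excluded_middle_informative _); rewrite Cmod_R, ?Rabs_R1, ?Rabs_R0; lra.
Qed.

Lemma ball_finite N : exists l : list T, forall w, (depth T w <= N)%nat -> In w l.
Proof.
  assert (Hnb : forall l : list T, exists l', forall v u, In v l -> adj T o par v u -> In u l').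
  { induction l as [|v l [l' Hl']]; [exists nil; simpl; tauto|].
    destruct (proj1 (proj2 (proj2 (treeP T))) v) as [lv Hv].
    exists (lv ++ l'). intros x u [<-|Hx] Hadj; apply in_or_app; [left; exact (Hv u Hadj) | right; exact (Hl' x u Hx Hadj)]. }
  induction N as [|N [l Hl]].
  - exists (o :: nil). intros w Hw. left. symmetry. apply depth_eq0. lia.
  - destruct (Hnb l) as [l' Hl']. exists (l ++ l'). intros w Hw. apply in_or_app.
    destruct (Nat.le_gt_cases (depth T w) N) as [Hle|Hgt]; [left; auto|right].
    assert (Hwo : w <> o) by (intros ->; rewrite depth_root in Hgt; lia).
    apply (Hl' (par w)); [apply Hl; rewrite depth_parent; lia|].
    right. split; auto.
Qed.

Definition ball (N : nat) : list T :=
  proj1_sig (constructive_indefinite_description _ (ball_finite N)).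

Lemma In_ball N w : (depth T w <= N)%nat -> In w (ball N).
Proof. exact (proj2_sig (constructive_indefinite_description _ (ball_finite N)) w). Qed.

Definition vtx_eq_dec (x y : T) : {x = y} + {x <> y} := excluded_middle_informative (x = y).

Definition sphere (N : nat) : list T :=
  nodup vtx_eq_dec (filter (fun v => Nat.eqb (depth T v) N) (ball N)).

Lemma In_sphere N v : In v (sphere N) <-> depth T v = N.
Proof.
  unfold sphere. rewrite nodup_In, filter_In, Nat.eqb_eq.
  split; [tauto|]. intros H. split; [apply In_ball; lia | exact H].
Qed.

Lemma NoDup_sphere N : NoDup (sphere N).
Proof. apply NoDup_nodup. Qed.

Definition psum (l : list (C * T)) (w : T) : C :=
  fold_right (fun av acc => Cplus (Cmult (fst av) (p T (snd av) w)) acc) (RtoC 0) l.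

Lemma psum_cons a l w : psum (a :: l) w = Cplus (Cmult (fst a) (p T (snd a) w)) (psum l w).
Proof. reflexivity. Qed.

Lemma psum_app l1 l2 w : psum (l1 ++ l2) w = Cplus (psum l1 w) (psum l2 w).
Proof.
  induction l1 as [|a l1 IH].
  - change (psum l2 w = Cplus (RtoC 0) (psum l2 w)). ring.
  - rewrite <- app_comm_cons, !psum_cons, IH. ring.
Qed.

Lemma psum_map_eq0 (c : T -> C) vs w :
  (forall v, In v vs -> ~ in_sector T v w) -> psum (map (fun v => (c v, v)) vs) w = RtoC 0.
Proof.
  induction vs as [|v vs IH]; intros H; [reflexivity|].
  rewrite map_cons, psum_cons, IH, p_notin_sector by (intros; apply H; simpl; auto). ring.
Qed.

Lemma psum_map_single (c : T -> C) vs w u :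
  NoDup vs -> In u vs -> (forall v, In v vs -> in_sector T v w <-> v = u) ->
  psum (map (fun v => (c v, v)) vs) w = c u.
Proof.
  induction vs as [|v vs IH]; intros Hnd Hu Hsec; [destruct Hu|].
  apply NoDup_cons_iff in Hnd as [Hv Hnd]. rewrite map_cons, psum_cons. simpl fst; simpl snd.
  destruct (vtx_eq_dec v u) as [->|Hne].
  - rewrite p_in_sector by (apply Hsec; simpl; auto).
    rewrite psum_map_eq0.
    + ring.
    + intros x Hx Hxw. apply Hv. rewrite <- (proj1 (Hsec x (or_intror Hx)) Hxw). exact Hx.
  - destruct Hu as [Hu|Hu]; [congruence|].
    rewrite p_notin_sector by (rewrite Hsec by (simpl; auto); exact Hne).
    rewrite IH by (auto; intros x Hx; apply Hsec; simpl; auto). ring.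
Qed.

Lemma in_P_ext (g h : T -> C) : (forall w, g w = h w) -> in_P T h -> in_P T g.
Proof. intros Hgh [l Hl]. exists l. intros w. rewrite Hgh. apply Hl. Qed.

Lemma in_P_add (g h : T -> C) : in_P T g -> in_P T h -> in_P T (fun w => Cplus (g w) (h w)).
Proof.
  intros [l1 H1] [l2 H2]. exists (l1 ++ l2). intros w.
  change (Cplus (g w) (h w) = psum (l1 ++ l2) w). rewrite psum_app, H1, H2. reflexivity.
Qed.

Lemma in_P_truncation (h : T -> C) N : in_P T (fun w => h (ancestor N w)).
Proof.
  induction N as [|N IH].
  - exists ((h o, o) :: nil). intros w. simpl. rewrite p_root.
    replace (ancestor 0 w) with o by (symmetry; apply iter_parent_eq_root; lia). ring.
  - set (c := fun v => Cminus (h v) (h (par v))).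
    apply (in_P_ext _ (fun w => Cplus (h (ancestor N w)) (psum (map (fun v => (c v, v)) (sphere (S N))) w))).
    2: { apply in_P_add; [exact IH|]. exists (map (fun v => (c v, v)) (sphere (S N))). reflexivity. }
    intros w. destruct (Nat.le_gt_cases (depth T w) N) as [Hle|Hgt].
    + rewrite !ancestor_id by lia. rewrite psum_map_eq0; [ring|].
      intros v Hv Hsec. apply In_sphere in Hv.
      apply in_sector_ancestor_depth in Hsec. lia.
    + rewrite (psum_map_single c _ w (ancestor (S N) w)).
      * unfold c. rewrite parent_ancestor_S by lia. ring.
      * apply NoDup_sphere.
      * apply In_sphere. rewrite depth_ancestor. lia.
      * intros v Hv. apply In_sphere in Hv. split.
        -- intros Hsec. apply in_sector_ancestor_depth in Hsec as [_ Hsec]. rewrite Hv in Hsec. exact Hsec.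
        -- intros ->. apply in_sector_ancestor.
Qed.

(* A countable family of truncations taking values in the grid: the code [n] packs the level [N],
   the mesh [m], and the grid codes of the values on [ball N]. *)
Definition dense_seq (n : nat) : T -> C :=
  let (N, r) := Cantor.of_nat n in
  let (m, r') := Cantor.of_nat r in
  let (len, c) := Cantor.of_nat r' in
  fun w => grid_C m (nth (index vtx_eq_dec (ancestor N w) (ball N)) (decode_list len c) O).

Lemma in_P_dense_seq n : in_P T (dense_seq n).
Proof.
  unfold dense_seq.
  destruct (Cantor.of_nat n) as [N r], (Cantor.of_nat r) as [m r'], (Cantor.of_nat r') as [len c].
  apply (in_P_truncation (fun u => grid_C m (nth (index vtx_eq_dec u (ball N)) (decode_list len c) O))).
Qed.

Lemma dense_seq_truncation N m (h : T -> nat) :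
  exists n, forall w, dense_seq n w = grid_C m (h (ancestor N w)).
Proof.
  set (s := map h (ball N)). destruct (decode_list_surj s) as [c Hc].
  exists (Cantor.to_nat (N, Cantor.to_nat (m, Cantor.to_nat (length s, c)))). intros w.
  unfold dense_seq. rewrite !Cantor.cancel_of_to, Hc. f_equal.
  apply nth_map_index, In_ball. rewrite depth_ancestor. lia.
Qed.

Lemma Df_add_le (f g : T -> C) v : Df T (fun w => Cplus (f w) (g w)) v <= Df T f v + Df T g v.
Proof.
  unfold Df.
  replace (Cminus (Cplus (f v) (g v)) (Cplus (f (par v)) (g (par v))))
    with (Cplus (Cminus (f v) (f (par v))) (Cminus (g v) (g (par v)))) by ring.
  apply Cmod_triangle.
Qed.

Lemma Df_sub_le (f g : T -> C) v : Df T (fsub T f g) v <= Df T f v + Df T g v.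
Proof.
  unfold Df, fsub.
  replace (Cminus (Cminus (f v) (g v)) (Cminus (f (par v)) (g (par v))))
    with (Cplus (Cminus (f v) (f (par v))) (Copp (Cminus (g v) (g (par v))))) by ring.
  rewrite <- (Cmod_opp (Cminus (g v) _)). apply Cmod_triangle.
Qed.

Lemma Df_le_sub (f g : T -> C) v : Df T f v <= Df T (fsub T f g) v + Df T g v.
Proof.
  unfold Df, fsub.
  replace (Cminus (f v) (f (par v)))
    with (Cplus (Cminus (Cminus (f v) (g v)) (Cminus (f (par v)) (g (par v))))
                (Cminus (g v) (g (par v)))) at 1 by ring.
  apply Cmod_triangle.
Qed.

Lemma Df_scale (a : C) (f : T -> C) v : Df T (fun w => Cmult a (f w)) v = Cmod a * Df T f v.
Proof. unfold Df. rewrite <- Cmod_mult. f_equal. ring. Qed.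

Lemma Df_const (c : C) v : Df T (fun _ => c) v = 0.
Proof. unfold Df. replace (Cminus c c) with (RtoC 0) by ring. apply Cmod_0. Qed.

Lemma Df_p_le v w : Df T (p T v) w <= 2.
Proof.
  unfold Df. replace (Cminus (p T v w) (p T v (par w))) with (Cplus (p T v w) (Copp (p T v (par w)))) by ring.
  eapply Rle_trans; [apply Cmod_triangle|]. rewrite Cmod_opp.
  pose proof (Cmod_p_le1 v w). pose proof (Cmod_p_le1 v (par w)). lra.
Qed.

Lemma Df_p_neq v w : w <> v -> Df T (p T v) w = 0.
Proof. intros Hw. unfold Df. rewrite p_parent by exact Hw. apply (Df_const (p T v w) w). Qed.

Section Weighted.
Variable k : nat.

Lemma wt_nonneg v : 0 <= wt T k v.
Proof. apply weight_nonneg. Qed.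

Lemma wt_le_weight v N : (depth T v <= N)%nat -> wt T k v <= weight k N.
Proof. apply weight_le. Qed.

Lemma wt_Df_nonneg f v : 0 <= wt T k v * Df T f v.
Proof. apply Rmult_le_pos; [apply wt_nonneg | apply Cmod_ge_0]. Qed.

Lemma in_L0_tail f : in_L0 T k f -> forall eps, 0 < eps ->
  exists N : nat, forall v, v <> o -> (N <= depth T v)%nat -> wt T k v * Df T f v < eps.
Proof.
  intros [_ Hf] eps Heps. destruct (Hf eps Heps) as [N HN]. exists N. intros v Hv Hd.
  rewrite <- (Rabs_pos_eq _ (wt_Df_nonneg f v)). exact (HN v Hv Hd).
Qed.

Lemma in_L0_intro f : in_L T k f ->
  (forall eps, 0 < eps ->
     exists N : nat, forall v, v <> o -> (N <= depth T v)%nat -> wt T k v * Df T f v < eps) ->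
  in_L0 T k f.
Proof.
  intros Hf Htail. split; [exact Hf|]. intros eps Heps. destruct (Htail eps Heps) as [N HN].
  exists N. intros v Hv Hd. rewrite Rabs_pos_eq by apply wt_Df_nonneg. exact (HN v Hv Hd).
Qed.

Lemma in_L_le_add (f g h : T -> C) : in_L T k g -> in_L T k h ->
  (forall v, v <> o -> Df T f v <= Df T g v + Df T h v) -> in_L T k f.
Proof.
  intros [M1 H1] [M2 H2] Hf. exists (M1 + M2). intros v Hv.
  specialize (H1 v Hv). specialize (H2 v Hv). specialize (Hf v Hv).
  apply (Rmult_le_compat_l (wt T k v)) in Hf; [lra | apply wt_nonneg].
Qed.

Lemma in_L0_le_add (f g h : T -> C) : in_L0 T k g -> in_L0 T k h ->
  (forall v, v <> o -> Df T f v <= Df T g v + Df T h v) -> in_L0 T k f.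
Proof.
  intros Hg Hh Hf. apply in_L0_intro; [exact (in_L_le_add f g h (proj1 Hg) (proj1 Hh) Hf)|].
  intros eps Heps.
  destruct (in_L0_tail g Hg (eps / 2)) as [N1 H1]; [lra|].
  destruct (in_L0_tail h Hh (eps / 2)) as [N2 H2]; [lra|].
  exists (Nat.max N1 N2). intros v Hv Hd.
  specialize (H1 v Hv ltac:(lia)). specialize (H2 v Hv ltac:(lia)). specialize (Hf v Hv).
  apply (Rmult_le_compat_l (wt T k v)) in Hf; [lra | apply wt_nonneg].
Qed.

Lemma in_L0_le_scale (f g : T -> C) (c : R) : 0 <= c -> in_L0 T k g ->
  (forall v, v <> o -> Df T f v <= c * Df T g v) -> in_L0 T k f.
Proof.
  intros Hc Hg Hf.
  assert (Hwf : forall v, v <> o -> wt T k v * Df T f v <= c * (wt T k v * Df T g v)).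
  { intros v Hv. replace (c * (wt T k v * Df T g v)) with (wt T k v * (c * Df T g v)) by ring.
    apply Rmult_le_compat_l; [apply wt_nonneg | exact (Hf v Hv)]. }
  apply in_L0_intro.
  - destruct (proj1 Hg) as [M HM]. exists (c * M). intros v Hv.
    eapply Rle_trans; [exact (Hwf v Hv)|]. apply Rmult_le_compat_l; auto.
  - intros eps Heps.
    destruct (in_L0_tail g Hg (eps / (c + 1))) as [N HN]; [apply Rdiv_lt_0_compat; lra|].
    exists N. intros v Hv Hd. specialize (HN v Hv Hd). specialize (Hwf v Hv).
    pose proof (wt_Df_nonneg g v).
    assert (Heq : (c + 1) * (eps / (c + 1)) = eps) by (field; lra).
    nra.
Qed.

Lemma in_L0_add (f g : T -> C) : in_L0 T k f -> in_L0 T k g -> in_L0 T k (fun w => Cplus (f w) (g w)).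
Proof. intros Hf Hg. apply (in_L0_le_add _ f g Hf Hg). intros v _. apply Df_add_le. Qed.

Lemma in_L0_scale (a : C) (f : T -> C) : in_L0 T k f -> in_L0 T k (fun w => Cmult a (f w)).
Proof.
  intros Hf. apply (in_L0_le_scale _ f (Cmod a) (Cmod_ge_0 a) Hf).
  intros v _. rewrite Df_scale. apply Rle_refl.
Qed.

Lemma in_L0_const (c : C) : in_L0 T k (fun _ => c).
Proof.
  apply in_L0_intro.
  - exists 0. intros v _. rewrite Df_const, Rmult_0_r. apply Rle_refl.
  - intros eps Heps. exists O. intros v _ _. rewrite Df_const, Rmult_0_r. exact Heps.
Qed.

Lemma in_L0_p v : in_L0 T k (p T v).
Proof.
  apply in_L0_intro.
  - exists (wt T k v * 2). intros w _. destruct (vtx_eq_dec w v) as [->|Hne].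
    + apply Rmult_le_compat_l; [apply wt_nonneg | apply Df_p_le].
    + rewrite Df_p_neq, Rmult_0_r by exact Hne. pose proof (wt_nonneg v). lra.
  - intros eps Heps. exists (S (depth T v)). intros w _ Hd.
    rewrite Df_p_neq, Rmult_0_r by (intros ->; lia). exact Heps.
Qed.

Lemma in_P_in_L0 (g : T -> C) : in_P T g -> in_L0 T k g.
Proof.
  intros [l Hl].
  replace g with (psum l) by (symmetry; apply functional_extensionality; exact Hl).
  clear Hl. induction l as [|[a v] l IH]; [apply in_L0_const|].
  apply (in_L0_add (fun w => Cmult a (p T v w)) (psum l)); [apply in_L0_scale, in_L0_p | exact IH].
Qed.

Lemma normk_le (h : T -> C) M : 0 <= M ->
  (forall v, v <> o -> wt T k v * Df T h v <= M) -> normk T k h <= Cmod (h o) + M.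
Proof.
  intros HM Hh. unfold normk. apply Rplus_le_compat_l.
  destruct (Lub_Rbar_correct (fun x => exists v, v <> o /\ x = wt T k v * Df T h v)) as [_ Hlub].
  assert (Hle : Rbar_le (Lub_Rbar (fun x => exists v, v <> o /\ x = wt T k v * Df T h v)) M).
  { apply Hlub. intros x [v [Hv ->]]. exact (Hh v Hv). }
  destruct (Lub_Rbar _); simpl in *; tauto || lra.
Qed.

Lemma wt_Df_le_normk (h : T -> C) v : in_L T k h -> v <> o -> wt T k v * Df T h v <= normk T k h.
Proof.
  intros [M HM] Hv. unfold normk.
  destruct (Lub_Rbar_correct (fun x => exists v, v <> o /\ x = wt T k v * Df T h v)) as [Hub Hlub].
  assert (Hle : Rbar_le (Lub_Rbar (fun x => exists v, v <> o /\ x = wt T k v * Df T h v)) M).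
  { apply Hlub. intros x [u [Hu ->]]. exact (HM u Hu). }
  assert (Hge : Rbar_le (wt T k v * Df T h v) (Lub_Rbar (fun x => exists v, v <> o /\ x = wt T k v * Df T h v))).
  { apply Hub. exists v. auto. }
  pose proof (Cmod_ge_0 (h o)).
  destruct (Lub_Rbar _); simpl in *; tauto || lra.
Qed.

Lemma in_L0_closed (f : T -> C) : in_L T k f ->
  (forall eps, 0 < eps -> exists g, in_L0 T k g /\ normk T k (fsub T f g) < eps) -> in_L0 T k f.
Proof.
  intros Hf Happrox. apply in_L0_intro; [exact Hf|]. intros eps Heps.
  destruct (Happrox (eps / 2)) as [g [Hg Hfg]]; [lra|].
  destruct (in_L0_tail g Hg (eps / 2)) as [N HN]; [lra|].
  exists N. intros v Hv Hd.
  assert (Hsub : in_L T k (fsub T f g)).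
  { apply (in_L_le_add _ f g Hf (proj1 Hg)). intros u _. apply Df_sub_le. }
  pose proof (wt_Df_le_normk _ v Hsub Hv). specialize (HN v Hv Hd).
  pose proof (Df_le_sub f g v) as Htri.
  apply (Rmult_le_compat_l (wt T k v)) in Htri; [lra | apply wt_nonneg].
Qed.

(* The three error terms: the root, the levels <= N (two rounding errors, weight at most
   [weight k N]), and the levels > N, where the truncation is constant on edges. *)
Lemma normk_sub_truncation (f q : T -> C) N delta M : 0 <= delta -> 0 <= M ->
  (forall u, (depth T u <= N)%nat -> Cmod (Cminus (f u) (q u)) <= delta) ->
  (forall v, v <> o -> (N < depth T v)%nat -> wt T k v * Df T f v <= M) ->
  normk T k (fsub T f (fun w => q (ancestor N w))) <= delta + (2 * delta * weight k N + M).
Proof.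
  intros Hdelta HM Hq Htail. pose proof (weight_nonneg k N).
  eapply Rle_trans; [apply normk_le|].
  - instantiate (1 := 2 * delta * weight k N + M). nra.
  - intros v Hv. unfold Df, fsub. cbv beta.
    destruct (Nat.le_gt_cases (depth T v) N) as [Hle|Hlt].
    + rewrite (ancestor_id N v), (ancestor_id N (par v)) by (rewrite ?depth_parent; lia).
      assert (Hdiff : Cmod (Cminus (Cminus (f v) (q v)) (Cminus (f (par v)) (q (par v)))) <= 2 * delta).
      { replace (Cminus (Cminus (f v) (q v)) (Cminus (f (par v)) (q (par v))))
          with (Cplus (Cminus (f v) (q v)) (Copp (Cminus (f (par v)) (q (par v))))) by ring.
        eapply Rle_trans; [apply Cmod_triangle|]. rewrite Cmod_opp.
        pose proof (Hq v Hle). pose proof (Hq (par v) ltac:(rewrite depth_parent; lia)). lra. }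
      pose proof (wt_le_weight v N Hle).
      assert (wt T k v * Cmod (Cminus (Cminus (f v) (q v)) (Cminus (f (par v)) (q (par v))))
              <= weight k N * (2 * delta))
        by (apply Rmult_le_compat; [apply wt_nonneg | apply Cmod_ge_0 | assumption | assumption]).
      lra.
    + rewrite (ancestor_parent N v Hlt).
      replace (Cminus (Cminus (f v) (q (ancestor N v))) (Cminus (f (par v)) (q (ancestor N v))))
        with (Cminus (f v) (f (par v))) by ring.
      specialize (Htail v Hv Hlt). unfold Df in Htail. nra.
  - unfold fsub. rewrite ancestor_id by (rewrite depth_root; lia).
    pose proof (Hq o ltac:(rewrite depth_root; lia)). lra.
Qed.

Lemma dense_seq_dense (f : T -> C) : in_L0 T k f ->
  forall eps, 0 < eps -> exists n, normk T k (fsub T f (dense_seq n)) < eps.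
Proof.
  intros Hf eps Heps.
  destruct (in_L0_tail f Hf (eps / 2)) as [N HN]; [lra|].
  set (W := weight k N). assert (HW : 0 <= W) by apply weight_nonneg.
  set (delta := eps / (4 * (1 + 2 * W))).
  assert (Hdelta : delta * (1 + 2 * W) = eps / 4) by (unfold delta; field; lra).
  assert (Hdelta0 : 0 < delta) by (unfold delta; apply Rdiv_lt_0_compat; lra).
  destruct (grid_C_dense delta Hdelta0) as [m [h Hh]].
  destruct (dense_seq_truncation N m (fun u => h (f u))) as [n Hn].
  exists n.
  replace (dense_seq n) with (fun w => grid_C m (h (f (ancestor N w))))
    by (symmetry; apply functional_extensionality; exact Hn).
  eapply Rle_lt_trans.
  - apply (normk_sub_truncation f (fun u => grid_C m (h (f u))) N delta (eps / 2)); try lra.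
    + intros u _. apply Hh.
    + intros v Hv Hlt. apply Rlt_le, HN; [exact Hv | lia].
  - fold W. nra.
Qed.

End Weighted.
End Tree.

Theorem proposition2p10 (T : rooted_tree) (k : nat) :
  (* P is contained in L0^(k) and dense in it for ||.||_k *)
  (forall g : T -> C, in_P T g -> in_L0 T k g) /\
  (forall f : T -> C, in_L0 T k f ->
     forall eps, 0 < eps -> exists g, in_P T g /\ normk T k (fsub T f g) < eps) /\
  (* L0^(k) is a linear subspace of L^(k) *)
  (forall f : T -> C, in_L0 T k f -> in_L T k f) /\
  in_L0 T k (fun _ => RtoC 0) /\
  (forall f g : T -> C, in_L0 T k f -> in_L0 T k g ->
     in_L0 T k (fun w => Cplus (f w) (g w))) /\
  (forall (a : C) (f : T -> C), in_L0 T k f -> in_L0 T k (fun w => Cmult a (f w))) /\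
  (* closed in L^(k) *)
  (forall f : T -> C, in_L T k f ->
     (forall eps, 0 < eps -> exists g, in_L0 T k g /\ normk T k (fsub T f g) < eps) ->
     in_L0 T k f) /\
  (* separable: a countable dense subset *)
  (exists d : nat -> T -> C, (forall n, in_L0 T k (d n)) /\
     forall f : T -> C, in_L0 T k f ->
       forall eps, 0 < eps -> exists n, normk T k (fsub T f (d n)) < eps).
Proof.
  split; [exact (in_P_in_L0 T k)|].
  split.
  { intros f Hf eps Heps. destruct (dense_seq_dense T k f Hf eps Heps) as [n Hn].
    exists (dense_seq T n). split; [apply in_P_dense_seq | exact Hn]. }
  split; [intros f Hf; exact (proj1 Hf)|].
  split; [apply in_L0_const|].
  split; [exact (in_L0_add T k)|].
  split; [exact (in_L0_scale T k)|].
  split; [exact (in_L0_closed T k)|].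
  exists (dense_seq T). split.
  - intros n. apply in_P_in_L0, in_P_dense_seq.
  - exact (dense_seq_dense T k).
Qed.
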